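(* Let $f\colon\mathbb R\to\mathbb R$ be continuous with $|f(x)|\leqslant a\cosh(bx)$ for all $x$, for some $a>0$, $b\in\mathbb R$. Fix $\lambda>0$. Let $\rho$ be a compactly supported Borel probability measure on $\mathbb R$, let $d>0$ be such that $\operatorname{supp}\rho\subset[-d,d]$, and for $n\geqslant1$ let $I^\rho_n=[-nd,nd]$, whose length is $L(I^\rho_n)=2nd$. Then for every $\epsilon>0$ there exists $n_0>0$ such that, for every $x\in\operatorname{supp}\rho$, $$\sum_{n=n_0}^\infty\frac{e^{-\lambda}\lambda^n}{(n+1)!}\Big\langle\delta_x*\rho^{*n},\ |f|+\epsilon+a\cosh\big(bL(I^\rho_{n_0})\big)\Big\rangle<\epsilon,$$ and $$\sum_{n=n_0}^\infty\frac{e^{-\lambda}\lambda^n}{(n+1)!}\Big\langle\rho^{*(n+1)},\ |f|+\epsilon+a\cosh\big(bL(I^\rho_{n_0})\big)\Big\rangle<\epsilon.$$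
   Context: $\langle\tau,\phi\rangle=\int\phi\,d\tau$; $*$ is convolution of measures, $\rho^{*n}$ the $n$-th convolution power with $\rho^{*0}=\delta_0$; $\delta_a$ is the Dirac measure at $a$. *)

From HB Require Import structures.
From mathcomp Require Import all_boot all_order all_algebra.
From mathcomp Require Import all_classical all_reals all_analysis.
Set Implicit Arguments. Unset Strict Implicit. Unset Printing Implicit Defensive.
Import Order.TTheory GRing.Theory Num.Theory.
Import numFieldNormedType.Exports.
Local Open Scope classical_set_scope.
Local Open Scope ring_scope.

Definition cosh {R : realType} (x : R) : R := (expR x + expR (- x)) / 2.

(* support of a (Borel) measure on R: points all of whose open balls have
   positive measure (= smallest closed set of full measure) *)
Definition msupport {R : realType} (mu : set R -> \bar R) : set R :=
  [set x | forall e : R, 0 < e -> (0 < mu (ball x e))%E].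

(* pairing <delta_x * rho^{*n}, phi> = \int...\int phi(x+y1+...+yn) drho(y1)...drho(yn),
   defined recursively; rho^{*0} = delta_0 so n = 0 gives phi x. *)
Fixpoint dirac_conv_pow {R : realType} (rho : {measure set R -> \bar R})
  (x : R) (n : nat) (phi : R -> \bar R) : \bar R :=
  match n with
  | 0%N => phi x
  | n'.+1 => (\int[rho]_y dirac_conv_pow rho (x + y) n' phi)%E
  end.

(* <rho^{*n}, phi> = <delta_0 * rho^{*n}, phi> *)
Definition conv_pow {R : realType} (rho : {measure set R -> \bar R})
  (n : nat) (phi : R -> \bar R) : \bar R := dirac_conv_pow rho 0 n phi.

From HB Require Import structures.
From mathcomp Require Import all_boot all_order all_algebra.
From mathcomp Require Import all_classical all_reals all_analysis.
From mathcomp Require Import measurable_realfun lra ring.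
Import Order.TTheory GRing.Theory Num.Theory.
Import numFieldNormedType.Exports.
Local Open Scope classical_set_scope.
Local Open Scope ring_scope.

(* The complement of the support of rho is covered by countably many null
   balls with rational centre and radius, so rho is carried by [-d, d].  Hence,
   writing phi = |f| + K with K the constant part, both
   <delta_x * rho^{*n}, phi> (|x| <= d) and <rho^{*(n+1)}, phi> are at most
   a e^{|b|(n+1)d} + K.  With E = e^{2|b|d}, both e^{|b|(n+1)d} and
   K <= eps + a e^{2|b| n0 d} are bounded by multiples of E^{n+1} once n >= n0,
   and lambda^n E^n / n! = (2 lambda E)^n / n! * 2^-n <= e^{2 lambda E} 2^-n.
   So the n-th term is at most Q 2^-n with Q independent of n0, the tail from
   n0 is at most 2 Q 2^-n0, and n0 is chosen to make this smaller than eps. *)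

Section support.
Context {R : realType} (mu : {measure set R -> \bar R}).

Definition null_rat_ball (n : nat) : set R :=
  if @unpickle (rat * rat)%type n is Some (c, r) then
    if mu (ball (ratr c : R) (ratr r)) == 0%E then ball (ratr c : R) (ratr r)
    else set0
  else set0.

Lemma measurable_null_rat_ball n : measurable (null_rat_ball n).
Proof.
rewrite /null_rat_ball; case: unpickle => [[c r]|] //.
by case: ifP => _ //; exact: measurable_ball.
Qed.

Lemma null_rat_ball0 n : mu (null_rat_ball n) = 0%E.
Proof.
rewrite /null_rat_ball; case: unpickle => [[c r]|]; last exact: measure0.
by case: ifP => [/eqP //|_]; exact: measure0.
Qed.

Lemma compl_msupport_sub_null_rat_balls :
  ~` msupport mu `<=` \bigcup_n null_rat_ball n.
Proof.
move=> z /existsNP[e /not_implyP[e0 /negP]]; rewrite -leNgt => mue.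
have [c /andP[c1 c2]] : exists c : rat, ratr c \in `](z - e / 4), (z + e / 4)[.
  by apply: rat_in_itvoo; lra.
have [r /andP[r1 r2]] : exists r : rat, ratr r \in `](e / 4), (e / 2)[.
  by apply: rat_in_itvoo; lra.
move: c1 c2 r1 r2; rewrite !bnd_simp => c1 c2 r1 r2.
have ball_sub : ball (ratr c : R) (ratr r) `<=` ball z e.
  move=> w; rewrite /ball /= !ltr_distlC => /andP[w1 w2].
  by apply/andP; split; lra.
exists (pickle (c, r)); first by [].
rewrite /null_rat_ball pickleK.
have -> : mu (ball (ratr c : R) (ratr r)) == 0%E.
  rewrite eq_le measure_ge0 andbT; apply: le_trans mue.
  by apply: le_measure => //; rewrite inE; exact: measurable_ball.
by rewrite /ball /= ltr_distlC; apply/andP; split; lra.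
Qed.

Lemma measure_compl_msupport0 (A : set R) : measurable A ->
  msupport mu `<=` A -> mu (~` A) = 0%E.
Proof.
move=> mA sA; apply/eqP; rewrite eq_le measure_ge0 andbT.
have cover : ~` A `<=` \bigcup_n null_rat_ball n.
  by apply: subset_trans compl_msupport_sub_null_rat_balls; exact: subsetC.
have := @measure_sigma_subadditive _ _ _ mu _ _ measurable_null_rat_ball _
  cover.
rewrite eseries0; last by move=> n _ _; exact: null_rat_ball0.
by apply; exact: measurableC.
Qed.

End support.

Section integral_bounds.
Local Open Scope ereal_scope.
Context d {T : measurableType d} {R : realType}.

(* Unlike [ge0_le_integral], no measurability is assumed (the integral of a
   nonnegative function is a supremum over its simple minorants): the iterated
   pairings dirac_conv_pow are not known to be measurable. *)
Lemma ge0_le_integralT (mu : {measure set T -> \bar R}) (f g : T -> \bar R) :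
  (forall x, 0 <= f x) -> (forall x, f x <= g x) ->
  \int[mu]_x f x <= \int[mu]_x g x.
Proof.
move=> f0 fg; have g0 x : 0 <= g x := le_trans (f0 x) (fg x).
rewrite !ge0_integralTE //; apply: ereal_sup_le => _ [h hf <-].
by exists h => // x; exact: le_trans (hf x) (fg x).
Qed.

Lemma probability_integral_le_ae (P : probability T R) (S : set T)
    (g : T -> \bar R) (C : R) :
  measurable S -> P (~` S) = 0 -> (0 <= C)%R -> (forall x, 0 <= g x) ->
  (forall x, S x -> g x <= C%:E) -> \int[P]_x g x <= C%:E.
Proof.
move=> mS PS0 C0 g0 gC.
pose M x := if x \in S then C%:E else +oo.
have mM : measurable_fun setT M.
  apply: measurable_fun_ifT => //; apply: (@measurable_fun_bool _ _ _ _ true).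
  rewrite setTI (_ : _ @^-1` _ = S) //.
  by apply/seteqP; split => x /=; [move/set_mem | move/mem_set].
apply: (@le_trans _ _ (\int[P]_x M x)).
  apply: ge0_le_integralT => // x; rewrite /M.
  by case: ifP => [/set_mem/gC //|_]; exact: leey.
rewrite -(setUv S) integral_setU //; first last.
- by apply/eqP; rewrite setICr.
- by rewrite setUv.
- exact: measurableC.
rewrite [X in _ + X]null_set_integral //; first last.
- exact: measurable_funS mM.
- exact: measurableC.
rewrite adde0 (eq_integral (cst C%:E)) => [|x /set_mem Sx]; last first.
  by rewrite /M mem_set.
by rewrite integral_cst // -[leRHS]mule1 lee_pmul // probability_le1.
Qed.

End integral_bounds.

Section dirac_conv_pow_bounds.
Local Open Scope ereal_scope.
Context {R : realType}.

Lemma dirac_conv_pow_ge0 (rho : {measure set R -> \bar R}) (phi : R -> \bar R) :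
  (forall y, 0 <= phi y) -> forall n z, 0 <= dirac_conv_pow rho z n phi.
Proof.
by move=> phi0; elim=> [|n IH] z //=; apply: integral_ge0 => y _; exact: IH.
Qed.

Lemma dirac_conv_pow_le_expR (rho : probability R R) (d c A K : R)
    (phi : R -> \bar R) :
  (0 <= d)%R -> (0 <= c)%R -> (0 <= A)%R -> (0 <= K)%R ->
  rho (~` `[(- d)%R, d]) = 0 -> (forall y, 0 <= phi y) ->
  (forall y, phi y <= (A * expR (c * `|y|) + K)%:E) ->
  forall n z,
    dirac_conv_pow rho z n phi <= (A * expR (c * (`|z| + n%:R * d)) + K)%:E.
Proof.
move=> d0 c0 A0 K0 rho_out phi0 phi_le; elim=> [|n IH] z /=.
  by rewrite mul0r addr0.
apply: (@probability_integral_le_ae _ _ _ _ `[(- d)%R, d]) => //.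
- by rewrite addr_ge0 // mulr_ge0 // expR_ge0.
- by move=> y; exact: dirac_conv_pow_ge0.
move=> y; rewrite /= in_itv /= => /andP[y1 y2].
apply: le_trans (IH _) _; rewrite lee_fin lerD2r ler_wpM2l // ler_expR.
rewrite ler_wpM2l //.
have : (`|y| <= d)%R by rewrite ler_norml y1 y2.
have := ler_normD z y; rewrite -natr1 mulrDl mul1r; lra.
Qed.

End dirac_conv_pow_bounds.

Section real_bounds.
Context {R : realType}.

Lemma cosh_ge0 (x : R) : 0 <= cosh x.
Proof. by rewrite /cosh divr_ge0 // addr_ge0 // expR_ge0. Qed.

Lemma cosh_le_expR_norm (x : R) : cosh x <= expR `|x|.
Proof.
rewrite /cosh; have [x0|x0] := leP 0 x.
  have : expR (- x) <= expR x by rewrite ler_expR; lra.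
  by rewrite ger0_norm //; lra.
have : expR x <= expR (- x) by rewrite ler_expR; lra.
by rewrite ltr0_norm //; lra.
Qed.

Lemma pow_div_fact_le_expR (x : R) n : 0 <= x -> x ^+ n / n`!%:R <= expR x.
Proof.
move=> x0; case: n => [|n]; last by have := expR_ge1Dxn n x0; lra.
by rewrite expr0 fact0 divr1; have := expR_ge1Dx x; lra.
Qed.

Lemma poisson_weight_le (lambda : R) n : 0 <= lambda ->
  expR (- lambda) * lambda ^+ n / (n.+1)`!%:R <= lambda ^+ n / n`!%:R.
Proof.
move=> l0; apply: (@le_trans _ _ (lambda ^+ n / (n.+1)`!%:R)).
  rewrite -mulrA; apply: ler_piMl; first by rewrite divr_ge0 ?exprn_ge0.
  by rewrite expR_le1 oppr_le0.
rewrite ler_pdivrMr ?ltr0n ?fact_gt0 // mulrAC ler_pdivlMr ?ltr0n ?fact_gt0 //.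
by rewrite ler_wpM2l ?exprn_ge0 // ler_nat factS leq_pmull.
Qed.

Lemma poisson_weight_geometric_le (lambda C E : R) n :
  0 <= lambda -> 0 <= C -> 0 <= E ->
  expR (- lambda) * lambda ^+ n / (n.+1)`!%:R * (C * E ^+ n.+1)
  <= C * E * expR (2 * (lambda * E)) * (2^-1) ^+ n.
Proof.
move=> l0 C0 E0.
have CE0 : 0 <= C * E ^+ n.+1 by rewrite mulr_ge0 // exprn_ge0.
apply: (le_trans (ler_wpM2r CE0 (@poisson_weight_le lambda n l0))).
have -> : lambda ^+ n / n`!%:R * (C * E ^+ n.+1)
    = C * E * ((2 * (lambda * E)) ^+ n / n`!%:R) * (2^-1) ^+ n.
  rewrite exprSr !exprMn exprVn; field.
  by rewrite expf_neq0 ?pnatr_eq0 //= -lt0n fact_gt0.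
rewrite ler_wpM2r ?exprn_ge0 // ler_wpM2l ?mulr_ge0 //.
by rewrite pow_div_fact_le_expR // !mulr_ge0.
Qed.

Lemma geometric_half_tail_le (Q : R) m N : 0 <= Q ->
  \sum_(m <= i < N) Q * (2^-1) ^+ i <= 2 * Q * (2^-1) ^+ m.
Proof.
move=> Q0; rewrite -mulr_sumr -mulrA mulrCA ler_wpM2l //.
have [Nm|mN] := leqP N m.
  by rewrite big_geq // mulr_ge0 // exprn_ge0.
rewrite -(subnKC (ltnW mN)) geometric_partial_tail.
apply: le_trans (geometric_le_lim _ _ _ _) _; rewrite ?exprn_ge0 //.
- by rewrite ger0_norm // invf_lt1 // ltr1n.
- have -> : (1 - 2^-1 : R) = 2^-1 by field.
  by rewrite invrK mulrC.
Qed.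

Lemma exists_geometric_half_lt (Q eps : R) : 0 <= Q -> 0 < eps ->
  exists N, (0 < N)%N /\ 2 * Q * (2^-1) ^+ N < eps.
Proof.
move=> Q0 e0; pose N := (Num.Def.truncn (2 * Q / eps)).+1.
exists N; split => //; have : 2 * Q / eps < N%:R := truncnS_gt _.
rewrite ltr_pdivrMr // exprVn ltr_pdivrMr ?exprn_gt0 // => hN.
apply: lt_trans hN _; rewrite mulrC ltr_pM2l // -natrX ltr_nat ltn_expl //.
Qed.

Lemma nneseries_le_geometric_half (u : (\bar R)^nat) (Q : R) N : 0 <= Q ->
  (forall n, (N <= n)%N -> (0 <= u n <= (Q * (2^-1) ^+ n)%:E)%E) ->
  (\sum_(N <= n <oo) u n <= (2 * Q * (2^-1) ^+ N)%:E)%E.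
Proof.
move=> Q0 u_bd; apply: lime_le.
  by apply: is_cvg_ereal_nneg_natsum => n /u_bd/andP[].
apply: nearW => M.
apply: (@le_trans _ _ (\sum_(N <= i < M) (Q * (2^-1) ^+ i)%:E)%E).
  rewrite big_nat_cond [leRHS]big_nat_cond; apply: lee_sum => i.
  by move=> /andP[/andP[/u_bd/andP[]]].
by rewrite sumEFin lee_fin geometric_half_tail_le.
Qed.

End real_bounds.

Section poisson_tail.
Context {R : realType}.
Variables (a b d eps lambda : R).
Hypotheses (a0 : 0 < a) (d0 : 0 < d) (eps0 : 0 < eps) (lambda0 : 0 < lambda).

Definition poisson_tail_const : R :=
  let E := expR (2 * (`|b| * d)) in (2 * a + eps) * E * expR (2 * (lambda * E)).

Lemma poisson_tail_const_ge0 : 0 <= poisson_tail_const.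
Proof. by rewrite !mulr_ge0 ?expR_ge0 // addr_ge0 // ?mulr_ge0 // ltW. Qed.

Lemma exp_cosh_le_exprS N n : (N <= n.+1)%N ->
  a * expR (`|b| * (n.+1%:R * d)) + (eps + a * cosh (b * (2 * N%:R * d)))
  <= (2 * a + eps) * expR (2 * (`|b| * d)) ^+ n.+1.
Proof.
move=> Nn; have u0 : 0 <= `|b| * d by rewrite mulr_ge0 // ltW.
rewrite -expRM_natl.
have exp_le : expR (`|b| * (n.+1%:R * d)) <= expR (n.+1%:R * (2 * (`|b| * d))).
  rewrite ler_expR; have : 0 <= n.+1%:R * (`|b| * d) by rewrite mulr_ge0.
  nra.
have cosh_le : cosh (b * (2 * N%:R * d)) <= expR (n.+1%:R * (2 * (`|b| * d))).
  apply: le_trans (cosh_le_expR_norm _) _; rewrite ler_expR.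
  rewrite normrM [`|2 * _ * d|]ger0_norm; last by rewrite !mulr_ge0 // ltW.
  have : N%:R * (`|b| * d) <= n.+1%:R * (`|b| * d).
    by rewrite ler_wpM2r // ler_nat.
  have -> : `|b| * (2 * N%:R * d) = 2 * (N%:R * (`|b| * d)) by ring.
  lra.
have ge1 : 1 <= expR (n.+1%:R * (2 * (`|b| * d))).
  by apply: le_trans (expR_ge1Dx _); rewrite lerDl mulr_ge0 // mulr_ge0.
have := ler_wpM2l (ltW a0) exp_le; have := ler_wpM2l (ltW a0) cosh_le.
have := ler_wpM2l (ltW eps0) ge1; lra.
Qed.

Lemma poisson_tail_le N (I : nat -> \bar R) :
  (forall n, (N <= n)%N -> (0 <= I n)%E /\
    (I n <= (a * expR (`|b| * (n.+1%:R * d))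
             + (eps + a * cosh (b * (2 * N%:R * d))))%:E)%E) ->
  (\sum_(N <= n <oo) (expR (- lambda) * lambda ^+ n / (n.+1)`!%:R)%:E * I n
   <= (2 * poisson_tail_const * (2^-1) ^+ N)%:E)%E.
Proof.
move=> I_bd.
apply: nneseries_le_geometric_half poisson_tail_const_ge0 _ => n Nn.
have [I0 I_le] := I_bd n Nn.
set w := expR (- lambda) * _ / _.
have w0 : 0 <= w by rewrite !mulr_ge0 ?invr_ge0 ?expR_ge0 ?exprn_ge0 // ltW.
have w0E : (0 <= w%:E)%E by rewrite lee_fin.
rewrite mule_ge0 //=; apply: le_trans (lee_wpmul2l w0E I_le) _.
rewrite -EFinM lee_fin.
apply: le_trans (ler_wpM2l w0 (exp_cosh_le_exprS _ _ (leqW Nn))) _.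
apply: poisson_weight_geometric_le; rewrite ?expR_ge0 ?ltW //.
by rewrite addr_gt0 ?mulr_gt0.
Qed.

End poisson_tail.

Theorem lemma2 (R : realType) (f : R -> R) (a b lambda : R)
  (rho : probability R R) (d : R) :
  continuous f ->
  0 < a ->
  (forall x, `|f x| <= a * cosh (b * x)) ->
  0 < lambda ->
  compact (msupport rho) ->
  0 < d ->
  msupport rho `<=` `[- d, d] ->
  forall eps : R, 0 < eps ->
  exists n0 : nat, (0 < n0)%N /\
    let phi := fun y : R => (`|f y| + eps + a * cosh (b * (2 * n0%:R * d)))%:E in
    (forall x, msupport rho x ->
      (\sum_(n0 <= n <oo)
         (expR (- lambda) * lambda ^+ n / (n.+1)`!%:R)%:E
           * dirac_conv_pow rho x n phi < eps%:E)%E)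
    /\
    (\sum_(n0 <= n <oo)
         (expR (- lambda) * lambda ^+ n / (n.+1)`!%:R)%:E
           * conv_pow rho n.+1 phi < eps%:E)%E.
Proof.
move=> _ a0 f_le l0 _ d0 supp_sub eps e0.
have Q0 := poisson_tail_const_ge0 _ b d _ lambda a0 e0.
have [N [N0 geo_lt]] := exists_geometric_half_lt _ _ Q0 e0.
exists N; split => // phi.
set K := eps + a * cosh (b * (2 * N%:R * d)).
have K0 : 0 <= K by rewrite addr_ge0 ?mulr_ge0 ?cosh_ge0 // ltW.
have phi0 y : (0 <= phi y)%E by rewrite lee_fin -addrA addr_ge0.
have phi_le y : (phi y <= (a * expR (`|b| * `|y|) + K)%:E)%E.
  rewrite lee_fin /K addrA lerD2r lerD2r.
  apply: le_trans (f_le y) _; rewrite -normrM ler_wpM2l ?cosh_le_expR_norm //.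
  exact: ltW.
have conv_le := dirac_conv_pow_le_expR rho d `|b| a K phi
  (ltW d0) (normr_ge0 b) (ltW a0) K0
  (measure_compl_msupport0 rho _ (measurable_itv _) supp_sub) phi0 phi_le.
have tail_lt I : (forall n, (N <= n)%N -> (0 <= I n)%E /\
    (I n <= (a * expR (`|b| * (n.+1%:R * d)) + K)%:E)%E) ->
  (\sum_(N <= n <oo) (expR (- lambda) * lambda ^+ n / (n.+1)`!%:R)%:E * I n
   < eps%:E)%E.
  move=> I_bd; rewrite -lte_fin in geo_lt; apply: le_lt_trans geo_lt.
  exact: (poisson_tail_le _ _ _ _ _ a0 d0 e0 l0 _ _ I_bd).
split.
- move=> x /supp_sub; rewrite /= in_itv /= => /andP[x1 x2].
  apply: tail_lt => n _; split; first exact: dirac_conv_pow_ge0.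
  apply: le_trans (conv_le n x) _; rewrite lee_fin lerD2r.
  apply: ler_wpM2l; first exact: ltW.
  rewrite ler_expR; apply: ler_wpM2l => //.
  by rewrite -natr1 mulrDl mul1r addrC lerD2l ler_norml x1 x2.
- apply: tail_lt => n _; split; first exact: dirac_conv_pow_ge0.
  by have := conv_le n.+1 0; rewrite normr0 add0r.
Qed.
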